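(* Let $A$ be a pca over $\omega$, working in ${\sf CZF}$ with the $\Pi\Sigma\mathrm I$ type structure (resp. ${\sf CZF}+{\sf REA}$ with the $\Pi\Sigma\mathrm W\mathrm I$ type structure). Let $\sigma\sim\tau$ and $i\approx_\sigma j$. Then $X_\sigma=X_\tau$ and $F_{\sigma,i}=F_{\tau,j}$.
   Context: Pca over $\omega$: a set $A$ with at least two elements, partial application $ab$ (left-associative), $\mathbf k,\mathbf s$ with $\mathbf kab=a$, $\mathbf sab\downarrow$, $\mathbf sabc\simeq ac(bc)$, and $\mathbf{succ},\mathbf{pred},\mathbf d$, $n\mapsto\bar n$ with $\mathbf{succ}\,\bar n=\overline{n+1}$, $\mathbf{pred}\,\overline{n+1}=\bar n$, $\mathbf d\bar n\bar mab=a$ if $n=m$, $b$ otherwise; $\mathbf0=\bar0,\mathbf1=\bar1$. Pairing $\mathbf p,\mathbf p_0,\mathbf p_1$ with $\mathbf p_i(\mathbf pa_0a_1)=a_i$; $a_i$ denotes $\mathbf p_ia$. Codes: ${\sf N}_n=\mathbf p\bar0\bar n$, ${\sf N}=\mathbf p\bar1\mathbf0$, $\Pi_ab=\mathbf p\bar2(\mathbf pab)$, $\Sigma_ab=\mathbf p\bar3(\mathbf pab)$, $\mathrm I_c(a,b)=\mathbf p\bar4(\mathbf pc(\mathbf pab))$, $\mathrm W_ab=\mathbf p\bar5(\mathbf pab)$. Type structure ($\sim$ on $A$, $\sim_\sigma$ for $\sigma\sim\sigma$), inductively: ${\sf N}_n\sim{\sf N}_n$, $a\sim_{{\sf N}_n}b$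 iff $a=b=\bar m$ with $m<n$; ${\sf N}\sim{\sf N}$, $a\sim_{\sf N}b$ iff $a=b=\bar n$ for some $n$; if $\sigma\sim\tau$ and ($a\sim_\sigma b\Rightarrow ia\sim jb$), then $\Pi_\sigma i\sim\Pi_\tau j$ with $f\sim_{\Pi_\sigma i}g$ iff $fa\sim_{ia}gb$ for all $a\sim_\sigma b$, and $\Sigma_\sigma i\sim\Sigma_\tau j$ with $a\sim_{\Sigma_\sigma i}b$ iff $a_0\sim_\sigma b_0$, $a_1\sim_{ia_0}b_1$; if $\sigma\sim\tau$, $a\sim_\sigma\breve a$, $b\sim_\sigma\breve b$, then $\mathrm I_\sigma(a,b)\sim\mathrm I_\tau(\breve a,\breve b)$ with $c\sim_{\mathrm I_\sigma(a,b)}d$ iff $c=d=\mathbf0$ and $a\sim_\sigma b$. $\Pi\Sigma\mathrm W\mathrm I$ also: if $\sigma\sim\tau$ and ($a\sim_\sigma b\Rightarrow ia\sim jb$) then $\delta=\mathrm W_\sigma i\sim\mathrm W_\tau j$, $\sim_\delta$ least with $c\sim_\delta d$ whenever $c_0\sim_\sigma d_0$ and $c_1p\sim_\delta d_1q$ for all $p\sim_{ic_0}q$. A type is a $\sigma$ with $\sigma\sim\sigma$; $a$ has type $\sigma$ if $a\sim_\sigma a$. For a type $\sigma$, $i\approx_\sigma j$ means $ia\sim jb$ whenever $a\sim_\sigma b$; $i$ is a family of types over $\sigma$ if $i\approx_\sigma i$. $\mathrm{V_{ext}}(A)$: smallest class containing every set $x\subseteq A\times A\times\mathrm{V_{ext}}(A)$.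 Internal pairing: $\{x\}_A=\{\langle\mathbf0,\mathbf0,x\rangle\}$, $\{x,y\}_A=\{\langle\mathbf0,\mathbf0,x\rangle,\langle\mathbf1,\mathbf1,y\rangle\}$, $\langle x,y\rangle_A=\{\langle\mathbf0,\mathbf0,\{x\}_A\rangle,\langle\mathbf1,\mathbf1,\{x,y\}_A\rangle\}$. $\dot n=\{\langle\bar m,\bar m,\dot m\rangle\mid m<n\}$. For $a$ of type $\sigma$, $a^\sigma$: for $\sigma={\sf N}_n,{\sf N}$ and $a=\bar m$, $a^\sigma=\dot m$; $f^{\Pi_\sigma i}=\{\langle a,b,\langle a^\sigma,(fa)^{ia}\rangle_A\rangle\mid a\sim_\sigma b\}$; $a^{\Sigma_\sigma i}=\langle(a_0)^\sigma,(a_1)^{ia_0}\rangle_A$; $c^{\mathrm I_\sigma(a,b)}=0$; $c^{\mathrm W_\sigma i}=\langle(c_0)^\sigma,\{\langle p,q,\langle p^{ic_0},(c_1p)^{\mathrm W_\sigma i}\rangle_A\rangle\mid p\sim_{ic_0}q\}\rangle_A$. For a type $\sigma$ and a family $i$ of types over $\sigma$: $X_\sigma=\{\langle a,b,a^\sigma\rangle\mid a\sim_\sigma b\}$ and $F_{\sigma,i}=\{\langle a,b,\langle a^\sigma,X_{ia}\rangle_A\rangle\mid a\sim_\sigma b\}$. *)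

(* Metatheory: Rocq's type theory (with classical epsilon),
   sets of V_ext(A) modelled by Aczel-style well-founded trees with
   extensional equality. *)
From Stdlib Require Import ClassicalEpsilon PeanoNat.

Set Implicit Arguments.

Definition ap_gen (T : Type) (app : T -> T -> option T) (x y : option T) : option T :=
  match x, y with
  | Some f, Some a => app f a
  | _, _ => None
  end.

Record PCA := {
  car : Type;
  app : car -> car -> option car;
  kk : car; ss : car; succ : car; pred : car; dd : car;
  pp : car; pp0 : car; pp1 : car;
  num : nat -> car;
  pca_two : exists x y : car, x <> y;
  pca_k : forall a b, ap_gen app (ap_gen app (Some kk) (Some a)) (Some b) = Some a;
  pca_s_def : forall a b, ap_gen app (ap_gen app (Some ss) (Some a)) (Some b) <> None;
  pca_s : forall a b c,
    ap_gen app (ap_gen app (ap_gen app (Some ss) (Some a)) (Some b)) (Some c)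
    = ap_gen app (ap_gen app (Some a) (Some c)) (ap_gen app (Some b) (Some c));
  pca_succ : forall n, app succ (num n) = Some (num (S n));
  pca_pred : forall n, app pred (num (S n)) = Some (num n);
  pca_d : forall n m a b,
    ap_gen app (ap_gen app (ap_gen app (ap_gen app (Some dd) (Some (num n)))
        (Some (num m))) (Some a)) (Some b)
    = Some (if Nat.eqb n m then a else b);
  pca_p0 : forall a0 a1,
    ap_gen app (Some pp0) (ap_gen app (ap_gen app (Some pp) (Some a0)) (Some a1)) = Some a0;
  pca_p1 : forall a0 a1,
    ap_gen app (Some pp1) (ap_gen app (ap_gen app (Some pp) (Some a0)) (Some a1)) = Some a1
}.

(* V_ext(A): sets of triples <a,b,x> with a,b in A and x in V_ext(A)    *)

Inductive V (A : Type) : Type :=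
  sup : forall (I : Type), (I -> A) -> (I -> A) -> (I -> V A) -> V A.
Arguments sup {A} I _ _ _.

Fixpoint Veq (A : Type) (x y : V A) {struct x} : Prop :=
  match x, y with
  | sup Ix fa fb fv, sup Jx ga gb gv =>
      (forall i, exists j, fa i = ga j /\ fb i = gb j /\ Veq (fv i) (gv j)) /\
      (forall j, exists i, fa i = ga j /\ fb i = gb j /\ Veq (fv i) (gv j))
  end.

Section PCAdefs.
Variable P : PCA.
Local Notation A := (car P).
Local Notation ap := (ap_gen (app P)).
Local Notation "` n" := (num P n) (at level 2).

Definition Vempty : V A := sup Empty_set (fun e => match e with end)
  (fun e => match e with end) (fun e => match e with end).

Definition Vsing (x : V A) : V A := sup unit (fun _ => `0) (fun _ => `0) (fun _ => x).
Definition Vdbl (x y : V A) : V A :=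
  sup bool (fun t => if t then `0 else `1) (fun t => if t then `0 else `1)
           (fun t => if t then x else y).
Definition Vpair (x y : V A) : V A := Vdbl (Vsing x) (Vdbl x y).

Definition Vadd (x : V A) (a b : A) (y : V A) : V A :=
  match x with
  | sup Ix fa fb fv =>
      sup (option Ix) (fun o => match o with Some i => fa i | None => a end)
                     (fun o => match o with Some i => fb i | None => b end)
                     (fun o => match o with Some i => fv i | None => y end)
  end.

Fixpoint Vdot (n : nat) : V A :=
  match n with
  | 0 => Vempty
  | S k => Vadd (Vdot k) (`k) (`k) (Vdot k)
  end.

Definition optV (o : option A) (h : A -> V A) : V A :=
  match o with Some x => h x | None => Vempty end.

Definition pairc (a b : option A) : option A := ap (ap (Some (pp P)) a) b.
Definition codeNn (n : nat) : option A := pairc (Some (`0)) (Some (`n)).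
Definition codeN : option A := pairc (Some (`1)) (Some (`0)).
Definition codePi (a b : A) : option A := pairc (Some (`2)) (pairc (Some a) (Some b)).
Definition codeSigma (a b : A) : option A := pairc (Some (`3)) (pairc (Some a) (Some b)).
Definition codeId (c a b : A) : option A :=
  pairc (Some (`4)) (pairc (Some c) (pairc (Some a) (Some b))).
Definition codeW (a b : A) : option A := pairc (Some (`5)) (pairc (Some a) (Some b)).

Definition rel := A -> A -> Prop.

Definition apprel (R : rel) (u v w z : A) : Prop :=
  exists x y, app P u v = Some x /\ app P w z = Some y /\ R x y.

(* the least relation ~_delta for delta = W_sigma i, given ~_sigma = Rs and
   the relations S a b (= ~_{i a}, for a ~_sigma b) *)
Inductive Wrel (Rs : rel) (S : A -> A -> rel) : rel :=
  | Wrel_intro : forall c d c0 c1 d0 d1,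
      app P (pp0 P) c = Some c0 -> app P (pp1 P) c = Some c1 ->
      app P (pp0 P) d = Some d0 -> app P (pp1 P) d = Some d1 ->
      Rs c0 d0 ->
      (forall p q, S c0 d0 p q -> apprel (Wrel Rs S) c1 p d1 q) ->
      Wrel Rs S c d.

(* The type structure, as the (small) inductive-recursive definition
   encoded by an indexed inductive family:
     Ty withW s t R I  means  s ~ t, where R is ~_s and I : a |-> a^s
   (both computed from the left code s by the defining clauses; I is
   constrained only on elements of type s).
   withW = false : the Pi Sigma I type structure;
   withW = true  : the Pi Sigma W I type structure. *)
Inductive Ty (withW : bool) : A -> A -> rel -> (A -> V A) -> Prop :=
  | Ty_Nn : forall n c (I : A -> V A),
      codeNn n = Some c ->
      (forall m, m < n -> Veq (I (`m)) (Vdot m)) ->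
      Ty withW c c (fun a b => exists m, m < n /\ a = `m /\ b = `m) I
  | Ty_N : forall c (I : A -> V A),
      codeN = Some c ->
      (forall m, Veq (I (`m)) (Vdot m)) ->
      Ty withW c c (fun a b => exists m, a = `m /\ b = `m) I
  | Ty_Pi : forall s t i j Rs Is (S : A -> A -> rel) (J : A -> A -> A -> V A)
                   c c' (I : A -> V A),
      Ty withW s t Rs Is ->
      (forall a b, Rs a b -> exists x y, app P i a = Some x /\ app P j b = Some y /\
                                         Ty withW x y (S a b) (J a b)) ->
      codePi s i = Some c -> codePi t j = Some c' ->
      (forall f, (forall a b, Rs a b -> apprel (S a b) f a f b) ->
         Veq (I f) (sup {ab : A * A | Rs (fst ab) (snd ab)}
                        (fun ab => fst (proj1_sig ab)) (fun ab => snd (proj1_sig ab))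
                        (fun ab => Vpair (Is (fst (proj1_sig ab)))
                                   (optV (app P f (fst (proj1_sig ab)))
                                         (J (fst (proj1_sig ab)) (snd (proj1_sig ab))))))) ->
      Ty withW c c' (fun f g => forall a b, Rs a b -> apprel (S a b) f a g b) I
  | Ty_Sigma : forall s t i j Rs Is (S : A -> A -> rel) (J : A -> A -> A -> V A)
                   c c' (I : A -> V A),
      Ty withW s t Rs Is ->
      (forall a b, Rs a b -> exists x y, app P i a = Some x /\ app P j b = Some y /\
                                         Ty withW x y (S a b) (J a b)) ->
      codeSigma s i = Some c -> codeSigma t j = Some c' ->
      (forall a a0 a1, app P (pp0 P) a = Some a0 -> app P (pp1 P) a = Some a1 ->
         Rs a0 a0 -> S a0 a0 a1 a1 ->
         Veq (I a) (Vpair (Is a0) (J a0 a0 a1))) ->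
      Ty withW c c'
        (fun a b => exists a0 a1 b0 b1,
            app P (pp0 P) a = Some a0 /\ app P (pp1 P) a = Some a1 /\
            app P (pp0 P) b = Some b0 /\ app P (pp1 P) b = Some b1 /\
            Rs a0 b0 /\ S a0 b0 a1 b1) I
  | Ty_Id : forall s t Rs Is a a' b b' c c' (I : A -> V A),
      Ty withW s t Rs Is -> Rs a a' -> Rs b b' ->
      codeId s a b = Some c -> codeId t a' b' = Some c' ->
      (forall x, x = `0 -> Rs a b -> Veq (I x) Vempty) ->
      Ty withW c c' (fun x y => x = `0 /\ y = `0 /\ Rs a b) I
  | Ty_W : forall s t i j Rs Is (S : A -> A -> rel) (J : A -> A -> A -> V A)
                   c c' (I : A -> V A),
      withW = true ->
      Ty withW s t Rs Is ->
      (forall a b, Rs a b -> exists x y, app P i a = Some x /\ app P j b = Some y /\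
                                         Ty withW x y (S a b) (J a b)) ->
      codeW s i = Some c -> codeW t j = Some c' ->
      (forall e e0 e1, Wrel Rs S e e ->
         app P (pp0 P) e = Some e0 -> app P (pp1 P) e = Some e1 ->
         Veq (I e) (Vpair (Is e0)
            (sup {pq : A * A | S e0 e0 (fst pq) (snd pq)}
                 (fun pq => fst (proj1_sig pq)) (fun pq => snd (proj1_sig pq))
                 (fun pq => Vpair (J e0 e0 (fst (proj1_sig pq)))
                                  (optV (app P e1 (fst (proj1_sig pq))) I))))) ->
      Ty withW c c' (Wrel Rs S) I.

Definition sim (withW : bool) (s t : A) : Prop := exists R I, Ty withW s t R I.

(* the decoding (~_s, a |-> a^s) of a type s (arbitrary if s is not a type) *)
Definition decode (withW : bool) (s : A) : rel * (A -> V A) :=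
  epsilon (inhabits ((fun _ _ : A => False), (fun _ : A => Vempty)))
          (fun d => Ty withW s s (fst d) (snd d)).

Definition simrel (withW : bool) (s : A) : rel := fst (decode withW s).
Definition interp (withW : bool) (s : A) : A -> V A := snd (decode withW s).

Definition approx (withW : bool) (s i j : A) : Prop :=
  forall a b, simrel withW s a b -> apprel (sim withW) i a j b.

Definition Xset (withW : bool) (s : A) : V A :=
  sup {ab : A * A | simrel withW s (fst ab) (snd ab)}
      (fun ab => fst (proj1_sig ab)) (fun ab => snd (proj1_sig ab))
      (fun ab => interp withW s (fst (proj1_sig ab))).

Definition Fset (withW : bool) (s i : A) : V A :=
  sup {ab : A * A | simrel withW s (fst ab) (snd ab)}
      (fun ab => fst (proj1_sig ab)) (fun ab => snd (proj1_sig ab))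
      (fun ab => Vpair (interp withW s (fst (proj1_sig ab)))
                       (optV (app P i (fst (proj1_sig ab))) (Xset withW))).

End PCAdefs.

(* The decoding (~_s, a |-> a^s) carried by a derivation of s ~ t is forced by the
   codes s and t.  By induction on derivations, ~_s is a partial equivalence relation,
   and any other derivation whose codes meet {s, t} yields the same relation and, on
   its field, extensionally equal interpretations: codes are pairs, so two derivations
   sharing a code come from the same clause with premises that again share codes.
   Re-choosing the families of a derivation then shows that ~ is symmetric and
   transitive with the interpretation unchanged, so s ~ t gives s ~ s and t ~ t, and
   the chosen decodings of s and t both agree with that of the given derivation.
   X_s and F_{s,i} depend on nothing else. *)

From Stdlib Require Import ClassicalEpsilon PeanoNat.
From Stdlib Require List.
Import List.ListNotations.
Local Open Scope list_scope.

Lemma Veq_refl {A : Type} (x : V A) : Veq x x.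
Proof. induction x as [I fa fb fv IH]; simpl; split; intro k; exists k; auto. Qed.

Lemma Veq_sym {A : Type} {x y : V A} : Veq x y -> Veq y x.
Proof.
  revert y; induction x as [I fa fb fv IH]; intros [J ga gb gv] [H1 H2]; simpl; split.
  - intro j; destruct (H2 j) as (i & e1 & e2 & h); exists i; auto.
  - intro i; destruct (H1 i) as (j & e1 & e2 & h); exists j; auto.
Qed.

Lemma Veq_trans {A : Type} {x y z : V A} : Veq x y -> Veq y z -> Veq x z.
Proof.
  revert y z; induction x as [I fa fb fv IH];
    intros [J ga gb gv] [K ha hb hv] [H1 H2] [G1 G2]; simpl; split.
  - intro i; destruct (H1 i) as (j & e1 & e2 & h); destruct (G1 j) as (k & f1 & f2 & g).
    exists k; repeat split; try congruence; eauto.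
  - intro k; destruct (G2 k) as (j & f1 & f2 & g); destruct (H2 j) as (i & e1 & e2 & h).
    exists i; repeat split; try congruence; eauto.
Qed.

Definition Vrel {A : Type} (R : A -> A -> Prop) (h : A -> A -> V A) : V A :=
  sup {ab : A * A | R (fst ab) (snd ab)}
      (fun ab => fst (proj1_sig ab)) (fun ab => snd (proj1_sig ab))
      (fun ab => h (fst (proj1_sig ab)) (snd (proj1_sig ab))).

Lemma Veq_Vrel {A : Type} (R R' : A -> A -> Prop) (h h' : A -> A -> V A) :
  (forall a b, R a b <-> R' a b) -> (forall a b, R a b -> Veq (h a b) (h' a b)) ->
  Veq (Vrel R h) (Vrel R' h').
Proof.
  intros E H; simpl; split.
  - intros [[a b] r]; exists (exist _ (a, b) (proj1 (E a b) r)); simpl; auto.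
  - intros [[a b] r]; exists (exist _ (a, b) (proj2 (E a b) r)); simpl.
    repeat split; apply H, E, r.
Qed.

Section Development.
Context {P : PCA} {w : bool}.
Local Notation A := (car P).
Local Notation TY := (@Ty P w).

Lemma Vsing_cong (x x' : V A) : Veq x x' -> Veq (Vsing P x) (Vsing P x').
Proof. intros H; simpl; split; intros []; exists tt; auto. Qed.

Lemma Vdbl_cong (x x' y y' : V A) :
  Veq x x' -> Veq y y' -> Veq (Vdbl P x y) (Vdbl P x' y').
Proof.
  intros H1 H2; simpl; split; intros [|];
    [exists true | exists false | exists true | exists false]; auto.
Qed.

Lemma Vpair_cong (x x' y y' : V A) :
  Veq x x' -> Veq y y' -> Veq (Vpair P x y) (Vpair P x' y').
Proof. intros; apply Vdbl_cong; [apply Vsing_cong | apply Vdbl_cong]; auto. Qed.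

Lemma num_inj n m : num P n = num P m -> n = m.
Proof.
  intro E. destruct (pca_two P) as (x & y & Hxy).
  pose proof (pca_d P n m x y) as H. rewrite E, (pca_d P m m x y), Nat.eqb_refl in H.
  destruct (Nat.eqb_spec n m); congruence.
Qed.

Lemma pairc_inv x o c : pairc P (Some x) o = Some c ->
  exists y, o = Some y /\ app P (pp0 P) c = Some x /\ app P (pp1 P) c = Some y.
Proof.
  destruct o as [y|]; unfold pairc; intro H.
  - exists y; split; auto.
    pose proof (pca_p0 P x y) as H0; pose proof (pca_p1 P x y) as H1.
    rewrite H in H0, H1; auto.
  - destruct (ap_gen (app P) (Some (pp P)) (Some x)); discriminate.
Qed.

(** * Codes *)

Inductive code_form :=
  | FNn (n : nat) | FN | FPi (a b : A) | FSigma (a b : A) | FId (c a b : A) | FW (a b : A).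

Definition encode (d : code_form) : option A :=
  match d with
  | FNn n => codeNn P n | FN => codeN P | FPi a b => codePi P a b
  | FSigma a b => codeSigma P a b | FId c a b => codeId P c a b | FW a b => codeW P a b
  end.

Definition code_tag (d : code_form) : nat :=
  match d with
  | FNn _ => 0 | FN => 1 | FPi _ _ => 2 | FSigma _ _ => 3 | FId _ _ _ => 4 | FW _ _ => 5
  end.

Definition code_fields (d : code_form) : list A :=
  match d with
  | FNn n => [num P n] | FN => [num P 0] | FPi a b | FSigma a b | FW a b => [a; b]
  | FId c a b => [c; a; b]
  end.

(* Every code is the right-nested pair [tag, field_1, ..., field_k]. *)
Fixpoint nest (l : list A) : option A :=
  match l with
  | [] => None
  | [x] => Some x
  | x :: l' => pairc P (Some x) (nest l')
  end.

Lemma encode_nest d : encode d = nest (num P (code_tag d) :: code_fields d).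
Proof. destruct d; reflexivity. Qed.

Lemma nest_cons {x l c} : l <> [] -> nest (x :: l) = Some c ->
  exists y, nest l = Some y /\ app P (pp0 P) c = Some x /\ app P (pp1 P) c = Some y.
Proof. destruct l; [congruence|]. intros _. apply pairc_inv. Qed.

Lemma nest_inj {l l' c} :
  length l = length l' -> nest l = Some c -> nest l' = Some c -> l = l'.
Proof.
  revert l' c; induction l as [|x l IH]; intros [|x' l'] c Hlen H H'; try discriminate.
  destruct l as [|y0 l0], l' as [|y0' l0']; try discriminate Hlen.
  - simpl in H, H'; congruence.
  - assert (Hl : y0 :: l0 <> []) by discriminate.
    assert (Hl' : y0' :: l0' <> []) by discriminate.
    destruct (nest_cons Hl H) as (y & Hy & H0 & H1).
    destruct (nest_cons Hl' H') as (y' & Hy' & H0' & H1').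
    rewrite H1 in H1'; injection H1'; intros <-.
    rewrite H0 in H0'; injection H0'; intros <-.
    f_equal; apply (IH _ y); auto.
Qed.

Lemma encode_inj d1 d2 {c} : encode d1 = Some c -> encode d2 = Some c -> d1 = d2.
Proof.
  rewrite !encode_nest; intros H1 H2.
  assert (Hne : forall d, code_fields d <> []) by (destruct d; discriminate).
  assert (Etag : code_tag d1 = code_tag d2).
  { destruct (nest_cons (Hne d1) H1) as (? & _ & T1 & _).
    destruct (nest_cons (Hne d2) H2) as (? & _ & T2 & _).
    apply num_inj; congruence. }
  destruct d1, d2; try discriminate Etag;
    pose proof (fun Hlen => nest_inj Hlen H1 H2) as E;
    specialize (E eq_refl); try (injection E; intros; subst);
    try (f_equal; apply num_inj); auto.
Qed.

Ltac reify_code e :=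
  lazymatch e with
  | codeNn _ ?n => constr:(FNn n)
  | codeN _ => constr:(FN)
  | codePi _ ?a ?b => constr:(FPi a b)
  | codeSigma _ ?a ?b => constr:(FSigma a b)
  | codeId _ ?c ?a ?b => constr:(FId c a b)
  | codeW _ ?a ?b => constr:(FW a b)
  end.

(* Two hypotheses [code1 = Some c] and [code2 = Some c] close the goal when the
   formers differ, and otherwise identify the fields. *)
Ltac compare_codes :=
  repeat match goal with
  | H1 : ?f1 = Some ?c, H2 : ?f2 = Some ?c |- _ =>
      let d1 := reify_code f1 in
      let d2 := reify_code f2 in
      let E := fresh "E" in
      pose proof (encode_inj d1 d2 H1 H2) as E; clear H2;
      first [discriminate E | injection E; intros; subst]
  end.

(** * Type formers *)

Definition family (Q : A -> A -> rel P -> (A -> V A) -> Prop) (i j : A) (Rs : rel P)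
    (S : A -> A -> rel P) (J : A -> A -> A -> V A) :=
  forall a b, Rs a b ->
    exists x y, app P i a = Some x /\ app P j b = Some y /\ Q x y (S a b) (J a b).

Definition pi_rel (Rs : rel P) (S : A -> A -> rel P) : rel P :=
  fun f g => forall a b, Rs a b -> apprel (S a b) f a g b.

Definition sigma_rel (Rs : rel P) (S : A -> A -> rel P) : rel P :=
  fun a b => exists a0 a1 b0 b1,
    app P (pp0 P) a = Some a0 /\ app P (pp1 P) a = Some a1 /\
    app P (pp0 P) b = Some b0 /\ app P (pp1 P) b = Some b1 /\
    Rs a0 b0 /\ S a0 b0 a1 b1.

Definition id_rel (Rs : rel P) (a b : A) : rel P :=
  fun x y => x = num P 0 /\ y = num P 0 /\ Rs a b.

Definition pi_value (Rs : rel P) (Is : A -> V A) (J : A -> A -> A -> V A) (f : A) : V A :=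
  Vrel Rs (fun a b => Vpair P (Is a) (optV P (app P f a) (J a b))).

Definition w_value (Is : A -> V A) (S : A -> A -> rel P) (J : A -> A -> A -> V A)
    (I : A -> V A) (e0 e1 : A) : V A :=
  Vpair P (Is e0)
    (Vrel (S e0 e0) (fun p _ => Vpair P (J e0 e0 p) (optV P (app P e1 p) I))).

Definition pi_interp (Rs : rel P) (Is : A -> V A) (S : A -> A -> rel P)
    (J : A -> A -> A -> V A) (I : A -> V A) :=
  forall f, pi_rel Rs S f f -> Veq (I f) (pi_value Rs Is J f).

Definition sigma_interp (Rs : rel P) (Is : A -> V A) (S : A -> A -> rel P)
    (J : A -> A -> A -> V A) (I : A -> V A) :=
  forall a a0 a1, app P (pp0 P) a = Some a0 -> app P (pp1 P) a = Some a1 ->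
    Rs a0 a0 -> S a0 a0 a1 a1 -> Veq (I a) (Vpair P (Is a0) (J a0 a0 a1)).

Definition id_interp (Rs : rel P) (a b : A) (I : A -> V A) :=
  forall x, x = num P 0 -> Rs a b -> Veq (I x) (Vempty P).

Definition w_interp (Rs : rel P) (Is : A -> V A) (S : A -> A -> rel P)
    (J : A -> A -> A -> V A) (I : A -> V A) :=
  forall e e0 e1, Wrel Rs S e e -> app P (pp0 P) e = Some e0 -> app P (pp1 P) e = Some e1 ->
    Veq (I e) (w_value Is S J I e0 e1).

(* The generated induction principles of [Wrel] and [Ty] give no hypothesis for the
   occurrences nested under [apprel] and [family]. *)
Lemma Wrel_nested_ind (Rs : rel P) (S : A -> A -> rel P) (Q : A -> A -> Prop) :
  (forall c d c0 c1 d0 d1,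
      app P (pp0 P) c = Some c0 -> app P (pp1 P) c = Some c1 ->
      app P (pp0 P) d = Some d0 -> app P (pp1 P) d = Some d1 ->
      Rs c0 d0 ->
      (forall p q, S c0 d0 p q -> apprel (Wrel Rs S) c1 p d1 q) ->
      (forall p q, S c0 d0 p q -> apprel Q c1 p d1 q) -> Q c d) ->
  forall c d, Wrel Rs S c d -> Q c d.
Proof.
  intro H. fix IH 3. intros c d [c' d' c0 c1 d0 d1 e1 e2 e3 e4 r h].
  apply (H c' d' c0 c1 d0 d1 e1 e2 e3 e4 r h).
  intros p q x. destruct (h p q x) as (u & v & h1 & h2 & d'').
  exists u, v. split; [exact h1 | split; [exact h2 | exact (IH _ _ d'')]].
Qed.

Lemma Wrel_mono (Rs Rs' : rel P) (S S' : A -> A -> rel P) :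
  (forall a b, Rs a b -> Rs' a b) ->
  (forall a b, Rs a b -> forall p q, S' a b p q -> S a b p q) ->
  forall c d, Wrel Rs S c d -> Wrel Rs' S' c d.
Proof.
  intros HR HS. apply Wrel_nested_ind.
  intros c d c0 c1 d0 d1 e1 e2 e3 e4 r _ h.
  apply (Wrel_intro c d e1 e2 e3 e4 (HR _ _ r)).
  intros p q x. apply h, (HS _ _ r _ _ x).
Qed.

Lemma Wrel_inv {Rs : rel P} {S : A -> A -> rel P} {c d} : Wrel Rs S c d ->
  exists c0 c1 d0 d1, app P (pp0 P) c = Some c0 /\ app P (pp1 P) c = Some c1 /\
    app P (pp0 P) d = Some d0 /\ app P (pp1 P) d = Some d1 /\ Rs c0 d0 /\
    (forall p q, S c0 d0 p q -> apprel (Wrel Rs S) c1 p d1 q).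
Proof. intros H; destruct H; do 4 eexists; eauto 10. Qed.

Lemma Ty_nested_ind (Q : A -> A -> rel P -> (A -> V A) -> Prop) :
  (forall n c (I : A -> V A), codeNn P n = Some c ->
      (forall m, m < n -> Veq (I (num P m)) (Vdot P m)) ->
      Q c c (fun a b => exists m, m < n /\ a = num P m /\ b = num P m) I) ->
  (forall c (I : A -> V A), codeN P = Some c ->
      (forall m, Veq (I (num P m)) (Vdot P m)) ->
      Q c c (fun a b => exists m, a = num P m /\ b = num P m) I) ->
  (forall s t i j Rs Is S J c c' I,
      TY s t Rs Is -> Q s t Rs Is -> family TY i j Rs S J -> family Q i j Rs S J ->
      codePi P s i = Some c -> codePi P t j = Some c' -> pi_interp Rs Is S J I ->
      Q c c' (pi_rel Rs S) I) ->
  (forall s t i j Rs Is S J c c' I,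
      TY s t Rs Is -> Q s t Rs Is -> family TY i j Rs S J -> family Q i j Rs S J ->
      codeSigma P s i = Some c -> codeSigma P t j = Some c' -> sigma_interp Rs Is S J I ->
      Q c c' (sigma_rel Rs S) I) ->
  (forall s t Rs Is a a' b b' c c' I,
      TY s t Rs Is -> Q s t Rs Is -> Rs a a' -> Rs b b' ->
      codeId P s a b = Some c -> codeId P t a' b' = Some c' -> id_interp Rs a b I ->
      Q c c' (id_rel Rs a b) I) ->
  (forall s t i j Rs Is S J c c' I, w = true ->
      TY s t Rs Is -> Q s t Rs Is -> family TY i j Rs S J -> family Q i j Rs S J ->
      codeW P s i = Some c -> codeW P t j = Some c' -> w_interp Rs Is S J I ->
      Q c c' (Wrel Rs S) I) ->
  forall s t R I, TY s t R I -> Q s t R I.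
Proof.
  intros HNn HN HPi HSig HId HW.
  fix IH 5.
  assert (Hfam : forall i j Rs S J, family TY i j Rs S J -> family Q i j Rs S J).
  { intros i j Rs S J F a b r. destruct (F a b r) as (x & y & h1 & h2 & d).
    exists x, y. split; [exact h1 | split; [exact h2 | exact (IH _ _ _ _ d)]]. }
  intros s t R I [n c I' e HI | c I' e HI
                 | s' t' i j Rs Is S J c c' I' D F e1 e2 HI
                 | s' t' i j Rs Is S J c c' I' D F e1 e2 HI
                 | s' t' Rs Is a a' b b' c c' I' D ra rb e1 e2 HI
                 | s' t' i j Rs Is S J c c' I' Hw D F e1 e2 HI].
  - exact (HNn n c I' e HI).
  - exact (HN c I' e HI).
  - exact (HPi _ _ _ _ _ _ _ _ _ _ _ D (IH _ _ _ _ D) F (Hfam _ _ _ _ _ F) e1 e2 HI).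
  - exact (HSig _ _ _ _ _ _ _ _ _ _ _ D (IH _ _ _ _ D) F (Hfam _ _ _ _ _ F) e1 e2 HI).
  - exact (HId _ _ _ _ _ _ _ _ _ _ _ D (IH _ _ _ _ D) ra rb e1 e2 HI).
  - exact (HW _ _ _ _ _ _ _ _ _ _ _ Hw D (IH _ _ _ _ D) F (Hfam _ _ _ _ _ F) e1 e2 HI).
Qed.

(** * Agreement of decodings *)

Definition PER (R : rel P) :=
  (forall a b, R a b -> R b a) /\ (forall a b c, R a b -> R b c -> R a c).

(* Interpretations are only constrained on the field of the relation. *)
Definition agree (R : rel P) (I : A -> V A) (R' : rel P) (I' : A -> V A) :=
  (forall a b, R a b <-> R' a b) /\ (forall a, R a a -> Veq (I a) (I' a)).

Definition overlap {T : Type} (s t x y : T) := s = x \/ s = y \/ t = x \/ t = y.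

Lemma PER_sym {R a b} : PER R -> R a b -> R b a.
Proof. intros [Hs _]; auto. Qed.

Lemma PER_trans {R a b c} : PER R -> R a b -> R b c -> R a c.
Proof. intros [_ Ht]; eauto. Qed.

Lemma PER_l {R a b} : PER R -> R a b -> R a a.
Proof. intros HR h; exact (PER_trans HR h (PER_sym HR h)). Qed.

Lemma PER_r {R a b} : PER R -> R a b -> R b b.
Proof. intros HR h; exact (PER_trans HR (PER_sym HR h) h). Qed.

Lemma agree_rel {R I R' I' a b} : agree R I R' I' -> R a b -> R' a b.
Proof. intros [h _]; apply h. Qed.

Lemma agree_rel_inv {R I R' I' a b} : agree R I R' I' -> R' a b -> R a b.
Proof. intros [h _]; apply h. Qed.

Lemma agree_sym {R I R' I'} : agree R I R' I' -> agree R' I' R I.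
Proof.
  intros [H1 H2]; split; [intros; symmetry; auto | intros a h; apply Veq_sym, H2, H1, h].
Qed.

Lemma agree_trans {R I R' I' R'' I''} :
  agree R I R' I' -> agree R' I' R'' I'' -> agree R I R'' I''.
Proof.
  intros [H1 H2] [G1 G2]; split.
  - intros a b; rewrite H1; auto.
  - intros a h; eapply Veq_trans; [apply H2, h | apply G2, H1, h].
Qed.

Section Former.
Context {Rs : rel P} {S : A -> A -> rel P} {J : A -> A -> A -> V A}.
Hypothesis Rs_per : PER Rs.
Hypothesis S_per : forall {a b}, Rs a b -> PER (S a b).
Hypothesis S_resp : forall {a b a' b'}, Rs a b -> Rs a' b' -> Rs a a' ->
  forall p q, S a b p q <-> S a' b' p q.

Lemma pi_rel_per : PER (pi_rel Rs S).
Proof.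
  split.
  - intros f g H a b r. assert (r' : Rs b a) by exact (PER_sym Rs_per r).
    destruct (H b a r') as (x & y & hx & hy & hs). exists y, x. do 2 (split; [assumption|]).
    apply (PER_sym (S_per r)), (S_resp r' r r'), hs.
  - intros f g h H1 H2 a b r. assert (ra : Rs a a) by exact (PER_l Rs_per r).
    destruct (H1 a a ra) as (x & y & hx & hy & hs).
    destruct (H2 a b r) as (y' & z & hy' & hz & hs').
    rewrite hy in hy'; injection hy'; intros <-.
    exists x, z. do 2 (split; [assumption|]).
    apply (PER_trans (S_per r) (b := y)); [apply (S_resp ra r ra) |]; assumption.
Qed.

Lemma sigma_rel_per : PER (sigma_rel Rs S).
Proof.
  split.
  - intros a b (a0 & a1 & b0 & b1 & h1 & h2 & h3 & h4 & r & hs).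
    assert (r' : Rs b0 a0) by exact (PER_sym Rs_per r).
    exists b0, b1, a0, a1. do 5 (split; [assumption|]).
    apply (S_resp r r' r), (PER_sym (S_per r)), hs.
  - intros a b c (a0 & a1 & b0 & b1 & h1 & h2 & h3 & h4 & r & hs)
      (b0' & b1' & c0 & c1 & g1 & g2 & g3 & g4 & r2 & hs2).
    rewrite h3 in g1; injection g1; intros <-. rewrite h4 in g2; injection g2; intros <-.
    assert (r3 : Rs a0 c0) by exact (PER_trans Rs_per r r2).
    assert (ra : Rs a0 a0) by exact (PER_l Rs_per r).
    assert (rb : Rs b0 a0) by exact (PER_sym Rs_per r).
    exists a0, a1, c0, c1. do 5 (split; [assumption|]).
    apply (PER_trans (S_per r3) (b := b1)); [apply (S_resp r r3 ra) | apply (S_resp r2 r3 rb)];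
      assumption.
Qed.

Lemma Wrel_per : PER (Wrel Rs S).
Proof.
  split.
  - apply Wrel_nested_ind. intros c d c0 c1 d0 d1 e1 e2 e3 e4 r _ h.
    assert (r' : Rs d0 c0) by exact (PER_sym Rs_per r).
    apply (Wrel_intro d c e3 e4 e1 e2 r').
    intros p q x. assert (x' : S c0 d0 q p) by apply (PER_sym (S_per r)), (S_resp r' r r'), x.
    destruct (h q p x') as (u & v & hu & hv & hh). exists v, u; auto.
  - intros a b c H; revert c; revert a b H.
    apply (Wrel_nested_ind Rs S (fun a b => forall c, Wrel Rs S b c -> Wrel Rs S a c)).
    intros c d c0 c1 d0 d1 e1 e2 e3 e4 r _ h e H2.
    destruct H2 as [d' e d0' d1' e0 e1' g1 g2 g3 g4 r2 h2].
    rewrite e3 in g1; injection g1; intros <-. rewrite e4 in g2; injection g2; intros <-.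
    assert (r3 : Rs c0 e0) by exact (PER_trans Rs_per r r2).
    assert (ra : Rs c0 c0) by exact (PER_l Rs_per r).
    assert (rb : Rs d0 c0) by exact (PER_sym Rs_per r).
    apply (Wrel_intro c e e1 e2 g3 g4 r3).
    intros p q x.
    assert (x1 : S c0 d0 p q) by apply (S_resp r r3 ra), x.
    assert (x2 : S d0 e0 q q) by apply (S_resp r2 r3 rb), (PER_r (S_per r3) x).
    destruct (h p q x1) as (u & v & hu & hv & hh).
    destruct (h2 q q x2) as (v' & z & hv' & hz & hh2).
    rewrite hv in hv'; injection hv'; intros <-.
    exists u, z; auto.
Qed.

Section Transfer.
Context {Is : A -> V A} {Rs2 : rel P} {Is2 : A -> V A} {S2 : A -> A -> rel P}
  {J2 : A -> A -> A -> V A}.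
Hypothesis dom_agree : agree Rs Is Rs2 Is2.
Hypothesis fam_agree : forall {a b}, Rs a b -> agree (S a b) (J a b) (S2 a b) (J2 a b).

Lemma pi_rel_iff f g : pi_rel Rs S f g <-> pi_rel Rs2 S2 f g.
Proof.
  split; intros H a b r.
  - assert (r' : Rs a b) by exact (agree_rel_inv dom_agree r).
    destruct (H a b r') as (x & y & hx & hy & hs).
    exists x, y; repeat split; auto. exact (agree_rel (fam_agree r') hs).
  - destruct (H a b (agree_rel dom_agree r)) as (x & y & hx & hy & hs).
    exists x, y; repeat split; auto. exact (agree_rel_inv (fam_agree r) hs).
Qed.

Lemma pi_value_agree {f} :
  pi_rel Rs S f f -> Veq (pi_value Rs Is J f) (pi_value Rs2 Is2 J2 f).
Proof.
  intro Hf. apply Veq_Vrel; [apply dom_agree |].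
  intros a b r. apply Vpair_cong; [apply dom_agree, (PER_l Rs_per r) |].
  destruct (Hf a b r) as (x & y & hx & _ & hs). rewrite hx; simpl.
  apply (fam_agree r), (PER_l (S_per r) hs).
Qed.

Lemma pi_interp_transfer {I} : pi_interp Rs Is S J I -> pi_interp Rs2 Is2 S2 J2 I.
Proof.
  intros HI f Hf. apply pi_rel_iff in Hf.
  exact (Veq_trans (HI f Hf) (pi_value_agree Hf)).
Qed.

Lemma pi_agree {I I2} : pi_interp Rs Is S J I -> pi_interp Rs2 Is2 S2 J2 I2 ->
  agree (pi_rel Rs S) I (pi_rel Rs2 S2) I2.
Proof.
  intros HI HI2. split; [exact pi_rel_iff |].
  intros f Hf. apply pi_rel_iff in Hf.
  exact (Veq_trans (pi_interp_transfer HI f Hf) (Veq_sym (HI2 f Hf))).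
Qed.

Lemma sigma_rel_iff a b : sigma_rel Rs S a b <-> sigma_rel Rs2 S2 a b.
Proof.
  split; intros (a0 & a1 & b0 & b1 & h1 & h2 & h3 & h4 & r & hs);
    exists a0, a1, b0, b1; do 4 (split; [assumption|]).
  - exact (conj (agree_rel dom_agree r) (agree_rel (fam_agree r) hs)).
  - assert (r' : Rs a0 b0) by exact (agree_rel_inv dom_agree r).
    exact (conj r' (agree_rel_inv (fam_agree r') hs)).
Qed.

Lemma sigma_interp_transfer {I} : sigma_interp Rs Is S J I -> sigma_interp Rs2 Is2 S2 J2 I.
Proof.
  intros HI a a0 a1 h0 h1 r x.
  assert (r' : Rs a0 a0) by exact (agree_rel_inv dom_agree r).
  assert (x' : S a0 a0 a1 a1) by exact (agree_rel_inv (fam_agree r') x).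
  apply (Veq_trans (HI a a0 a1 h0 h1 r' x')).
  apply Vpair_cong; [apply dom_agree, r' | apply (fam_agree r'), x'].
Qed.

Lemma sigma_agree {I I2} : sigma_interp Rs Is S J I -> sigma_interp Rs2 Is2 S2 J2 I2 ->
  agree (sigma_rel Rs S) I (sigma_rel Rs2 S2) I2.
Proof.
  intros HI HI2. split; [exact sigma_rel_iff |].
  intros a (a0 & a1 & b0 & b1 & h1 & h2 & h3 & h4 & r & x).
  rewrite h1 in h3; injection h3; intros <-. rewrite h2 in h4; injection h4; intros <-.
  assert (r2 : Rs2 a0 a0) by exact (agree_rel dom_agree r).
  assert (x2 : S2 a0 a0 a1 a1) by exact (agree_rel (fam_agree r) x).
  exact (Veq_trans (sigma_interp_transfer HI a a0 a1 h1 h2 r2 x2)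
                   (Veq_sym (HI2 a a0 a1 h1 h2 r2 x2))).
Qed.

Lemma Wrel_iff c d : Wrel Rs S c d <-> Wrel Rs2 S2 c d.
Proof.
  split; apply Wrel_mono.
  - intros a b r; exact (agree_rel dom_agree r).
  - intros a b r p q x; exact (agree_rel_inv (fam_agree r) x).
  - intros a b r; exact (agree_rel_inv dom_agree r).
  - intros a b r p q x; exact (agree_rel (fam_agree (agree_rel_inv dom_agree r)) x).
Qed.

Lemma w_value_agree {I I2 e0 e1} : Rs e0 e0 ->
  (forall p q, S e0 e0 p q -> Veq (optV P (app P e1 p) I) (optV P (app P e1 p) I2)) ->
  Veq (w_value Is S J I e0 e1) (w_value Is2 S2 J2 I2 e0 e1).
Proof.
  intros r H. apply Vpair_cong; [apply dom_agree, r |].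
  apply Veq_Vrel; [apply (fam_agree r) |].
  intros p q x. apply Vpair_cong; [apply (fam_agree r), (PER_l (S_per r) x) | exact (H p q x)].
Qed.

Lemma w_interp_transfer {I} : w_interp Rs Is S J I -> w_interp Rs2 Is2 S2 J2 I.
Proof.
  intros HI e e0 e1 He h0 h1. apply Wrel_iff in He.
  destruct (Wrel_inv He) as (c0 & c1 & d0 & d1 & g0 & _ & g2 & _ & r & _).
  rewrite h0 in g0, g2; injection g0; injection g2; intros <- <-.
  exact (Veq_trans (HI e e0 e1 He h0 h1) (w_value_agree r (fun _ _ _ => Veq_refl _))).
Qed.

Lemma w_agree {I I2} : w_interp Rs Is S J I -> w_interp Rs2 Is2 S2 J2 I2 ->
  agree (Wrel Rs S) I (Wrel Rs2 S2) I2.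
Proof.
  intros HI HI2. split; [exact Wrel_iff |].
  assert (G : forall c d, Wrel Rs S c d -> Veq (I c) (I2 c)).
  { apply Wrel_nested_ind. intros c d c0 c1 d0 d1 e1 e2 e3 e4 r h IH.
    assert (Hc : Wrel Rs S c c) by exact (PER_l Wrel_per (Wrel_intro c d e1 e2 e3 e4 r h)).
    assert (rc : Rs c0 c0) by exact (PER_l Rs_per r).
    apply (Veq_trans (HI c c0 c1 Hc e1 e2)).
    refine (Veq_trans _ (Veq_sym (HI2 c c0 c1 (proj1 (Wrel_iff c c) Hc) e1 e2))).
    apply w_value_agree; [exact rc |].
    intros p q x. apply (S_resp rc r rc) in x.
    destruct (IH p q x) as (u & v & hu & _ & Hu). rewrite hu; exact Hu. }
  intros e He; exact (G e e He).
Qed.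

End Transfer.
End Former.

Lemma PER_overlap_rel {R R2 : rel P} {a a' a2 a2'} :
  PER R -> (forall x y, R x y <-> R2 x y) -> R a a' -> R2 a2 a2' -> overlap a a' a2 a2' ->
  R a a2.
Proof.
  intros HR E r r2 ov. apply E in r2.
  destruct ov as [<-|[<-|[<-|<-]]].
  - exact (PER_l HR r).
  - exact (PER_sym HR r2).
  - exact r.
  - exact (PER_trans HR r (PER_sym HR r2)).
Qed.

Lemma id_agree {Rs Rs2 : rel P} {a b a2 b2} {I I2 : A -> V A} :
  PER Rs -> (forall x y, Rs x y <-> Rs2 x y) -> Rs a a2 -> Rs b b2 ->
  id_interp Rs a b I -> id_interp Rs2 a2 b2 I2 ->
  agree (id_rel Rs a b) I (id_rel Rs2 a2 b2) I2.
Proof.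
  intros Rs_per HR ra rb HI HI2.
  assert (E : Rs a b <-> Rs2 a2 b2).
  { rewrite <- HR. split; intro h.
    - exact (PER_trans Rs_per (PER_trans Rs_per (PER_sym Rs_per ra) h) rb).
    - exact (PER_trans Rs_per (PER_trans Rs_per ra h) (PER_sym Rs_per rb)). }
  split.
  - intros x y; unfold id_rel; rewrite E; tauto.
  - intros x (hx & _ & h). exact (Veq_trans (HI x hx h) (Veq_sym (HI2 x hx (proj1 E h)))).
Qed.

(** * Coherence of derivations *)

Definition coherent (s t : A) (R : rel P) (I : A -> V A) :=
  PER R /\ forall x y R' I', TY x y R' I' -> overlap s t x y -> agree R I R' I'.

Ltac solve_overlap :=
  unfold overlap; repeat (first [left; solve [reflexivity | assumption] | right]);
  solve [reflexivity | assumption].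

Section CoherentFamily.
Context {i j : A} {Rs : rel P} {S : A -> A -> rel P} {J : A -> A -> A -> V A}.
Hypothesis Rs_per : PER Rs.
Hypothesis F_coh : family coherent i j Rs S J.
Hypothesis F_ty : family TY i j Rs S J.

Lemma fam_per : forall a b, Rs a b -> PER (S a b).
Proof. intros a b r; destruct (F_coh _ _ r) as (x & y & _ & _ & [h _]); exact h. Qed.

Lemma fam_agree_overlap {a b x y R' I'} : Rs a b -> TY x y R' I' ->
  overlap (app P i a) (app P j b) (Some x) (Some y) -> agree (S a b) (J a b) R' I'.
Proof.
  intros r D ov. destruct (F_coh _ _ r) as (x0 & y0 & hx & hy & [_ U]).
  apply (U _ _ _ _ D). rewrite hx, hy in ov.
  destruct ov as [E|[E|[E|E]]]; injection E; intros ->; solve_overlap.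
Qed.

Lemma fam_agree_along {a b a' b'} : Rs a b -> Rs a' b' -> Rs a a' ->
  agree (S a b) (J a b) (S a' b') (J a' b').
Proof.
  (* Consecutive derivations at (a, b), (a, a'), (a', a'), (a', b') share a code. *)
  intros r r' raa'. assert (ra' : Rs a' a') by exact (PER_r Rs_per raa').
  destruct (F_ty _ _ raa') as (x1 & y1 & hx1 & hy1 & D1).
  destruct (F_ty _ _ ra') as (x2 & y2 & hx2 & hy2 & D2).
  destruct (F_ty _ _ r') as (x3 & y3 & hx3 & hy3 & D3).
  apply (agree_trans (fam_agree_overlap r D1 ltac:(solve_overlap))).
  apply (agree_trans (fam_agree_overlap raa' D2 ltac:(solve_overlap))).
  exact (fam_agree_overlap ra' D3 ltac:(solve_overlap)).
Qed.

Lemma fam_resp : forall a b a' b', Rs a b -> Rs a' b' -> Rs a a' ->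
  forall p q, S a b p q <-> S a' b' p q.
Proof. intros a b a' b' r r' raa'; apply (fam_agree_along r r' raa'). Qed.

Lemma fam_agree_cross {i2 j2 Rs2 S2 J2} : family TY i2 j2 Rs2 S2 J2 ->
  (forall a b, Rs a b -> Rs2 a b) -> overlap i j i2 j2 ->
  forall a b, Rs a b -> agree (S a b) (J a b) (S2 a b) (J2 a b).
Proof.
  intros F2 HR ov a b r. destruct (F2 a b (HR _ _ r)) as (x & y & hx & hy & D).
  assert (ra : Rs a a) by exact (PER_l Rs_per r).
  assert (rb : Rs b b) by exact (PER_r Rs_per r).
  (* If the shared function code occurs on opposite sides, pass through (b, b) or (a, a). *)
  destruct ov as [<-|[<-|[<-|<-]]].
  - exact (fam_agree_overlap r D ltac:(solve_overlap)).
  - apply (agree_trans (fam_agree_along r rb r)).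
    exact (fam_agree_overlap rb D ltac:(solve_overlap)).
  - apply (agree_trans (fam_agree_along r ra ra)).
    exact (fam_agree_overlap ra D ltac:(solve_overlap)).
  - exact (fam_agree_overlap r D ltac:(solve_overlap)).
Qed.

Lemma fam_compare {s t x y i2 j2 Is Rs2 Is2 S2 J2} :
  (forall x y R' I', TY x y R' I' -> overlap s t x y -> agree Rs Is R' I') ->
  TY x y Rs2 Is2 -> overlap s t x y -> family TY i2 j2 Rs2 S2 J2 -> overlap i j i2 j2 ->
  agree Rs Is Rs2 Is2 /\ forall a b, Rs a b -> agree (S a b) (J a b) (S2 a b) (J2 a b).
Proof.
  intros U D ov F2 ov2. pose proof (U _ _ _ _ D ov) as HB.
  exact (conj HB (fam_agree_cross F2 (fun _ _ => agree_rel HB) ov2)).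
Qed.

End CoherentFamily.

Lemma coherent_Nn n c (I : A -> V A) : codeNn P n = Some c ->
  (forall m, m < n -> Veq (I (num P m)) (Vdot P m)) ->
  coherent c c (fun a b => exists m, m < n /\ a = num P m /\ b = num P m) I.
Proof.
  intros e HI. split.
  - split.
    + intros a b (m & hm & -> & ->); eauto.
    + intros a b d (m & hm & -> & ->) (m' & _ & E & ->); eauto.
  - intros x y R' I' D2 ov.
    destruct D2 as [n2 c2 I2 e2 HI2 | | | | | ]; destruct ov as [E|[E|[E|E]]]; subst;
      compare_codes; split; try tauto;
      intros a (m & hm & -> & _); exact (Veq_trans (HI m hm) (Veq_sym (HI2 m hm))).
Qed.

Lemma coherent_N c (I : A -> V A) : codeN P = Some c ->
  (forall m, Veq (I (num P m)) (Vdot P m)) ->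
  coherent c c (fun a b => exists m, a = num P m /\ b = num P m) I.
Proof.
  intros e HI. split.
  - split.
    + intros a b (m & -> & ->); eauto.
    + intros a b d (m & -> & ->) (m' & E & ->); eauto.
  - intros x y R' I' D2 ov.
    destruct D2 as [ | c2 I2 e2 HI2 | | | | ]; destruct ov as [E|[E|[E|E]]]; subst;
      compare_codes; split; try tauto;
      intros a (m & -> & _); exact (Veq_trans (HI m) (Veq_sym (HI2 m))).
Qed.

Lemma coherent_pi s t i j Rs Is S J c c' I :
  coherent s t Rs Is -> family TY i j Rs S J -> family coherent i j Rs S J ->
  codePi P s i = Some c -> codePi P t j = Some c' -> pi_interp Rs Is S J I ->
  coherent c c' (pi_rel Rs S) I.
Proof.
  intros [Rs_per U] F_ty F_coh e1 e2 HI. pose proof (fam_per F_coh) as S_per.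
  split; [exact (pi_rel_per Rs_per S_per (fam_resp Rs_per F_coh F_ty)) |].
  intros x y R' I' D2 ov.
  destruct D2 as [ | | s2 t2 i2 j2 Rs2 Is2 S2 J2 c2 c2' I2 D2 F2 e3 e4 HI2 | | | ];
    destruct ov as [E|[E|[E|E]]]; subst; compare_codes;
    destruct (fam_compare Rs_per F_coh F_ty U D2 ltac:(solve_overlap) F2 ltac:(solve_overlap))
      as [HB Hcross];
    exact (pi_agree Rs_per S_per HB Hcross HI HI2).
Qed.

Lemma coherent_sigma s t i j Rs Is S J c c' I :
  coherent s t Rs Is -> family TY i j Rs S J -> family coherent i j Rs S J ->
  codeSigma P s i = Some c -> codeSigma P t j = Some c' -> sigma_interp Rs Is S J I ->
  coherent c c' (sigma_rel Rs S) I.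
Proof.
  intros [Rs_per U] F_ty F_coh e1 e2 HI. pose proof (fam_per F_coh) as S_per.
  split; [exact (sigma_rel_per Rs_per S_per (fam_resp Rs_per F_coh F_ty)) |].
  intros x y R' I' D2 ov.
  destruct D2 as [ | | | s2 t2 i2 j2 Rs2 Is2 S2 J2 c2 c2' I2 D2 F2 e3 e4 HI2 | | ];
    destruct ov as [E|[E|[E|E]]]; subst; compare_codes;
    destruct (fam_compare Rs_per F_coh F_ty U D2 ltac:(solve_overlap) F2 ltac:(solve_overlap))
      as [HB Hcross];
    exact (sigma_agree HB Hcross HI HI2).
Qed.

Lemma coherent_w s t i j Rs Is S J c c' I :
  coherent s t Rs Is -> family TY i j Rs S J -> family coherent i j Rs S J ->
  codeW P s i = Some c -> codeW P t j = Some c' -> w_interp Rs Is S J I ->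
  coherent c c' (Wrel Rs S) I.
Proof.
  intros [Rs_per U] F_ty F_coh e1 e2 HI.
  pose proof (fam_per F_coh) as S_per. pose proof (fam_resp Rs_per F_coh F_ty) as S_resp.
  split; [exact (Wrel_per Rs_per S_per S_resp) |].
  intros x y R' I' D2 ov.
  destruct D2 as [ | | | | | s2 t2 i2 j2 Rs2 Is2 S2 J2 c2 c2' I2 _ D2 F2 e3 e4 HI2];
    destruct ov as [E|[E|[E|E]]]; subst; compare_codes;
    destruct (fam_compare Rs_per F_coh F_ty U D2 ltac:(solve_overlap) F2 ltac:(solve_overlap))
      as [HB Hcross];
    exact (w_agree Rs_per S_per S_resp HB Hcross HI HI2).
Qed.

Lemma coherent_id s t Rs Is a a' b b' c c' I :
  coherent s t Rs Is -> Rs a a' -> Rs b b' ->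
  codeId P s a b = Some c -> codeId P t a' b' = Some c' -> id_interp Rs a b I ->
  coherent c c' (id_rel Rs a b) I.
Proof.
  intros [Rs_per U] ra rb e1 e2 HI. split.
  - split; intros; unfold id_rel in *; tauto.
  - intros x y R' I' D2 ov.
    destruct D2 as [ | | | | s2 t2 Rs2 Is2 a2 a2' b2 b2' c2 c2' I2 D2 ra2 rb2 e3 e4 HI2 | ];
      destruct ov as [E|[E|[E|E]]]; subst; compare_codes;
      pose proof (U _ _ _ _ D2 ltac:(solve_overlap)) as [HR _];
      (apply (id_agree Rs_per HR);
       [ apply (PER_overlap_rel Rs_per HR ra ra2); solve_overlap
       | apply (PER_overlap_rel Rs_per HR rb rb2); solve_overlap
       | exact HI | exact HI2 ]).
Qed.

Lemma Ty_coherent {s t R I} : TY s t R I -> coherent s t R I.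
Proof.
  revert s t R I; apply Ty_nested_ind.
  - exact coherent_Nn.
  - exact coherent_N.
  - intros until 1; exact (coherent_pi _ _ _ _ _ _ _ _ _ _ _).
  - intros until 1; exact (coherent_sigma _ _ _ _ _ _ _ _ _ _ _).
  - intros until 1; exact (coherent_id _ _ _ _ _ _ _ _ _ _ _).
  - intros until 2; exact (coherent_w _ _ _ _ _ _ _ _ _ _ _).
Qed.

Lemma Ty_per {s t R I} : TY s t R I -> PER R.
Proof. intro D; exact (proj1 (Ty_coherent D)). Qed.

Lemma family_coherent {i j Rs S J} : family TY i j Rs S J -> family coherent i j Rs S J.
Proof.
  intros F a b r. destruct (F a b r) as (x & y & hx & hy & D).
  exists x, y; exact (conj hx (conj hy (Ty_coherent D))).
Qed.

Lemma family_per {i j Rs S J} : family TY i j Rs S J -> forall a b, Rs a b -> PER (S a b).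
Proof. intro F; exact (fam_per (family_coherent F)). Qed.

(** * Symmetry and transitivity *)

Lemma choose_family (i j : A) (D : rel P) :
  (forall a b, D a b -> exists x y R I, app P i a = Some x /\ app P j b = Some y /\ TY x y R I) ->
  exists S J, family TY i j D S J.
Proof.
  intro H.
  set (SJ := fun a b => epsilon (inhabits ((fun _ _ : A => False), (fun _ : A => Vempty P)))
        (fun d : rel P * (A -> V A) =>
           exists x y, app P i a = Some x /\ app P j b = Some y /\ TY x y (fst d) (snd d))).
  exists (fun a b => fst (SJ a b)), (fun a b => snd (SJ a b)).
  intros a b r. apply epsilon_spec.
  destruct (H a b r) as (x & y & R & I & hx & hy & d). exists (R, I), x, y; auto.
Qed.

Lemma family_flip {s t i j Rs R1 Is S J} :
  TY s t Rs Is -> TY t s R1 Is -> family TY i j Rs S J ->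
  family (fun x y _ I => exists R, TY y x R I) i j Rs S J ->
  exists S' J', family TY j i R1 S' J' /\ agree Rs Is R1 Is /\
    forall a b, Rs a b -> agree (S a b) (J a b) (S' a b) (J' a b).
Proof.
  intros D1 D1' F_ty F_sym. destruct (Ty_coherent D1) as [Rs_per U].
  assert (HB : agree Rs Is R1 Is) by (apply (U _ _ _ _ D1'); solve_overlap).
  destruct (choose_family j i R1) as (S' & J' & F').
  { intros a b r.
    destruct (F_sym b a (PER_sym Rs_per (agree_rel_inv HB r))) as (x & y & hx & hy & R & D).
    exists y, x, R, (J b a); auto. }
  exists S', J'; split; [exact F' | split; [exact HB |]].
  exact (fam_agree_cross Rs_per (family_coherent F_ty) F_ty F' (fun _ _ => agree_rel HB)
           ltac:(solve_overlap)).
Qed.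

Lemma Ty_sym {s t R I} : TY s t R I -> exists R', TY t s R' I.
Proof.
  revert s t R I; apply Ty_nested_ind.
  - intros n c I e HI. eexists; eapply Ty_Nn; eassumption.
  - intros c I e HI. eexists; eapply Ty_N; eassumption.
  - intros s t i j Rs Is S J c c' I D1 (R1 & D1') F_ty F_sym e1 e2 HI.
    destruct (family_flip D1 D1' F_ty F_sym) as (S' & J' & F' & HB & Hcross).
    eexists; eapply Ty_Pi; [exact D1' | exact F' | exact e2 | exact e1 |].
    exact (pi_interp_transfer (Ty_per D1) (family_per F_ty) HB Hcross HI).
  - intros s t i j Rs Is S J c c' I D1 (R1 & D1') F_ty F_sym e1 e2 HI.
    destruct (family_flip D1 D1' F_ty F_sym) as (S' & J' & F' & HB & Hcross).
    eexists; eapply Ty_Sigma; [exact D1' | exact F' | exact e2 | exact e1 |].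
    exact (sigma_interp_transfer HB Hcross HI).
  - intros s t Rs Is a a' b b' c c' I D1 (R1 & D1') ra rb e1 e2 HI.
    destruct (Ty_coherent D1) as [Rs_per U].
    assert (HB : agree Rs Is R1 Is) by (apply (U _ _ _ _ D1'); solve_overlap).
    eexists; eapply Ty_Id; [exact D1' | | | exact e2 | exact e1 |].
    + exact (agree_rel HB (PER_sym Rs_per ra)).
    + exact (agree_rel HB (PER_sym Rs_per rb)).
    + intros x hx r. apply (HI x hx).
      apply (agree_rel_inv HB) in r.
      exact (PER_trans Rs_per ra (PER_trans Rs_per r (PER_sym Rs_per rb))).
  - intros s t i j Rs Is S J c c' I Hw D1 (R1 & D1') F_ty F_sym e1 e2 HI.
    destruct (family_flip D1 D1' F_ty F_sym) as (S' & J' & F' & HB & Hcross).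
    eexists; eapply Ty_W; [exact Hw | exact D1' | exact F' | exact e2 | exact e1 |].
    exact (w_interp_transfer (family_per F_ty) HB Hcross HI).
Qed.

Lemma Ty_Pi_inv_l {s i c u R I} : TY c u R I -> codePi P s i = Some c ->
  exists t j Rs Is S J, TY s t Rs Is /\ family TY i j Rs S J /\ codePi P t j = Some u.
Proof. intros D e; destruct D; compare_codes; do 6 eexists; eauto. Qed.

Lemma Ty_Sigma_inv_l {s i c u R I} : TY c u R I -> codeSigma P s i = Some c ->
  exists t j Rs Is S J, TY s t Rs Is /\ family TY i j Rs S J /\ codeSigma P t j = Some u.
Proof. intros D e; destruct D; compare_codes; do 6 eexists; eauto. Qed.

Lemma Ty_Id_inv_l {s a b c u R I} : TY c u R I -> codeId P s a b = Some c ->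
  exists t Rs Is a' b', TY s t Rs Is /\ Rs a a' /\ Rs b b' /\ codeId P t a' b' = Some u.
Proof. intros D e; destruct D; compare_codes; do 5 eexists; eauto. Qed.

Lemma Ty_W_inv_l {s i c u R I} : TY c u R I -> codeW P s i = Some c ->
  exists t j Rs Is S J, TY s t Rs Is /\ family TY i j Rs S J /\ codeW P t j = Some u.
Proof. intros D e; destruct D; compare_codes; do 6 eexists; eauto. Qed.

Lemma family_compose {s t t2 i j j2 Rs Rs2 R3 Is Is2 S J S2 J2} :
  TY s t Rs Is -> TY t t2 Rs2 Is2 -> TY s t2 R3 Is -> family TY i j Rs S J ->
  family (fun x y _ I => forall z R' I', TY y z R' I' -> exists R, TY x z R I) i j Rs S J ->
  family TY j j2 Rs2 S2 J2 ->
  exists S' J', family TY i j2 R3 S' J' /\ agree Rs Is R3 Is /\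
    forall a b, Rs a b -> agree (S a b) (J a b) (S' a b) (J' a b).
Proof.
  intros D1 D2 D3 F_ty F_tr F2. destruct (Ty_coherent D1) as [Rs_per U].
  assert (HB3 : agree Rs Is R3 Is) by (apply (U _ _ _ _ D3); solve_overlap).
  assert (HB2 : agree Rs Is Rs2 Is2) by (apply (U _ _ _ _ D2); solve_overlap).
  destruct (choose_family i j2 R3) as (S' & J' & F').
  { intros a b r. apply (agree_rel_inv HB3) in r.
    destruct (F_tr a b r) as (x & y & hx & hy & IH).
    destruct (F2 b b (agree_rel HB2 (PER_r Rs_per r))) as (y' & z & hy' & hz & D).
    rewrite hy in hy'; injection hy'; intros <-.
    destruct (IH _ _ _ D) as (R & D'). exists x, z, R, (J a b); auto. }
  exists S', J'; split; [exact F' | split; [exact HB3 |]].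
  exact (fam_agree_cross Rs_per (family_coherent F_ty) F_ty F' (fun _ _ => agree_rel HB3)
           ltac:(solve_overlap)).
Qed.

Lemma Ty_trans {s t R I} : TY s t R I ->
  forall u R' I', TY t u R' I' -> exists R'', TY s u R'' I.
Proof.
  revert s t R I.
  apply (Ty_nested_ind (fun s t _ I => forall u R' I', TY t u R' I' -> exists R'', TY s u R'' I)).
  - intros n c I e HI u R' I' D2.
    destruct D2; compare_codes; eexists; eapply Ty_Nn; eassumption.
  - intros c I e HI u R' I' D2.
    destruct D2; compare_codes; eexists; eapply Ty_N; eassumption.
  - intros s t i j Rs Is S J c c' I D1 IH F_ty F_tr e1 e2 HI u R' I' D2.
    destruct (Ty_Pi_inv_l D2 e2) as (t2 & j2 & Rs2 & Is2 & S2 & J2 & D2' & F2 & e3).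
    destruct (IH _ _ _ D2') as (R3 & D3).
    destruct (family_compose D1 D2' D3 F_ty F_tr F2) as (S' & J' & F' & HB & Hcross).
    eexists; eapply Ty_Pi; [exact D3 | exact F' | exact e1 | exact e3 |].
    exact (pi_interp_transfer (Ty_per D1) (family_per F_ty) HB Hcross HI).
  - intros s t i j Rs Is S J c c' I D1 IH F_ty F_tr e1 e2 HI u R' I' D2.
    destruct (Ty_Sigma_inv_l D2 e2) as (t2 & j2 & Rs2 & Is2 & S2 & J2 & D2' & F2 & e3).
    destruct (IH _ _ _ D2') as (R3 & D3).
    destruct (family_compose D1 D2' D3 F_ty F_tr F2) as (S' & J' & F' & HB & Hcross).
    eexists; eapply Ty_Sigma; [exact D3 | exact F' | exact e1 | exact e3 |].
    exact (sigma_interp_transfer HB Hcross HI).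
  - intros s t Rs Is a a' b b' c c' I D1 IH ra rb e1 e2 HI u R' I' D2.
    destruct (Ty_Id_inv_l D2 e2) as (t2 & Rs2 & Is2 & a2 & b2 & D2' & ra2 & rb2 & e3).
    destruct (IH _ _ _ D2') as (R3 & D3).
    destruct (Ty_coherent D1) as [Rs_per U].
    assert (HB3 : agree Rs Is R3 Is) by (apply (U _ _ _ _ D3); solve_overlap).
    assert (HB2 : agree Rs Is Rs2 Is2) by (apply (U _ _ _ _ D2'); solve_overlap).
    apply (agree_rel_inv HB2) in ra2, rb2.
    eexists; eapply Ty_Id; [exact D3 | | | exact e1 | exact e3 |].
    + exact (agree_rel HB3 (PER_trans Rs_per ra ra2)).
    + exact (agree_rel HB3 (PER_trans Rs_per rb rb2)).
    + intros x hx r. exact (HI x hx (agree_rel_inv HB3 r)).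
  - intros s t i j Rs Is S J c c' I Hw D1 IH F_ty F_tr e1 e2 HI u R' I' D2.
    destruct (Ty_W_inv_l D2 e2) as (t2 & j2 & Rs2 & Is2 & S2 & J2 & D2' & F2 & e3).
    destruct (IH _ _ _ D2') as (R3 & D3).
    destruct (family_compose D1 D2' D3 F_ty F_tr F2) as (S' & J' & F' & HB & Hcross).
    eexists; eapply Ty_W; [exact Hw | exact D3 | exact F' | exact e1 | exact e3 |].
    exact (w_interp_transfer (family_per F_ty) HB Hcross HI).
Qed.

Lemma Ty_refl_l {s t R I} : TY s t R I -> exists R', TY s s R' I.
Proof. intro D. destruct (Ty_sym D) as (R1 & D1). exact (Ty_trans D _ _ _ D1). Qed.

Lemma Ty_refl_r {s t R I} : TY s t R I -> exists R', TY t t R' I.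
Proof. intro D. destruct (Ty_sym D) as (R1 & D1). exact (Ty_trans D1 _ _ _ D). Qed.

Lemma decode_spec {s R I} : TY s s R I -> TY s s (simrel P w s) (interp P w s).
Proof.
  intro D. unfold simrel, interp, decode.
  apply (epsilon_spec _ (fun d : rel P * (A -> V A) => TY s s (fst d) (snd d))).
  exists (R, I); exact D.
Qed.

Lemma sim_agree {s t} : sim P w s t ->
  PER (simrel P w s) /\ agree (simrel P w s) (interp P w s) (simrel P w t) (interp P w t).
Proof.
  intros (R & I & D).
  destruct (Ty_refl_l D) as (Rs & Ds); destruct (Ty_refl_r D) as (Rt & Dt).
  destruct (Ty_coherent (decode_spec Ds)) as [Ps Us].
  destruct (Ty_coherent (decode_spec Dt)) as [_ Ut].
  split; [exact Ps |].
  apply (agree_trans (Us _ _ _ _ D ltac:(solve_overlap))).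
  apply agree_sym, (Ut _ _ _ _ D); solve_overlap.
Qed.

Lemma Xset_eq {s t} : sim P w s t -> Veq (Xset P w s) (Xset P w t).
Proof.
  intro H. destruct (sim_agree H) as [Ps [HR HI]].
  exact (Veq_Vrel _ _ (fun a _ => interp P w s a) (fun a _ => interp P w t a) HR
           (fun a b r => HI a (PER_l Ps r))).
Qed.

End Development.

Theorem mainTheorem8 :
  forall (P : PCA) (withW : bool) (s t i j : car P),
    sim P withW s t ->
    approx P withW s i j ->
    Veq (Xset P withW s) (Xset P withW t) /\
    Veq (Fset P withW s i) (Fset P withW t j).
Proof.
  intros P w s t i j H Happrox. split; [exact (Xset_eq H) |].
  destruct (sim_agree H) as [Ps [HR HI]].
  refine (Veq_Vrel _ _ (fun a _ => Vpair P (interp P w s a) (optV P (app P i a) (Xset P w)))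
            (fun a _ => Vpair P (interp P w t a) (optV P (app P j a) (Xset P w))) HR _).
  intros a b r. pose proof (PER_l Ps r) as ra.
  apply Vpair_cong; [exact (HI a ra) |].
  destruct (Happrox a a ra) as (x & y & hx & hy & Hxy). rewrite hx, hy.
  exact (Xset_eq Hxy).
Qed.
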